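(* Let $p$ be an odd prime, $n$ a positive integer, and let $f$ be the function on $\mathbb{F}_{p^n}$ defined by $f(0)=1$, $f(1)=0$ and $f(x)=x^{-1}$ for $x\notin\{0,1\}$. Then $\nabla_f=4$ if $p=29$ or $p=37$, and $\nabla_f\le 3$ otherwise. Furthermore, for $a,b\in\mathbb{F}_{p^n}$, $\nabla_f(a,b)=4$ if and only if one of the following holds: (1) $p=29$ and $(a,b)=(\pm2,\pm12)$ or $(a,b)=(\pm12,\pm2)$; (2) $p=37$ and $(a,b)=(\pm2,\pm6)$ or $(a,b)=(\pm6,\pm2)$.
   Context: For $a,b\in\mathbb{F}_{p^n}$, $\nabla_f(a,b)$ is the number of $x\in\mathbb{F}_{p^n}$ with $f(x+a+b)-f(x+a)-f(x+b)+f(x)=0$. For odd $p$ the second-order zero differential uniformity is $\nabla_f=\max\{\nabla_f(a,b): a,b\in\mathbb{F}_{p^n}\setminus\{0\}\}$. The function $f$ is $Inv\circ(0,1)$ with $Inv(x)=x^{p^n-2}$ and $(0,1)$ the transposition swapping $0$ and $1$. Integers such as $\pm2,\pm6,\pm12$ denote the corresponding elements of the prime field $\mathbb{F}_p\subseteq\mathbb{F}_{p^n}$. *)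

From HB Require Import structures.
From mathcomp Require Import all_boot all_order all_algebra.
Set Implicit Arguments. Unset Strict Implicit. Unset Printing Implicit Defensive.
Import GRing.Theory.
Local Open Scope ring_scope.

Definition finv01 (F : finFieldType) (x : F) : F :=
  if x == 0 then 1 else if x == 1 then 0 else x^-1.

Definition nabla (F : finFieldType) (f : F -> F) (a b : F) : nat :=
  #|[set x : F | f (x + a + b) - f (x + a) - f (x + b) + f x == 0%R]|.

Definition nablaU (F : finFieldType) (f : F -> F) : nat :=
  \max_(a : F | a != 0%R) \max_(b : F | b != 0%R) nabla f a b.

Definition pm (F : finFieldType) (c : nat) (x : F) : Prop :=
  x = c%:R \/ x = - c%:R.

From HB Require Import structures.
From mathcomp Require Import all_boot all_order all_algebra.
From mathcomp Require Import ring zify finfield.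
Set Implicit Arguments. Unset Strict Implicit. Unset Printing Implicit Defensive.
Import GRing.Theory.
Local Open Scope ring_scope.

(* For a, b <> 0 write S for the set of zeros of
   x |-> f (x + a + b) - f (x + a) - f (x + b) + f x and call {x, x + a, x + b, x + a + b}
   the square of x.  If the square avoids 0 and 1, clearing denominators in
   1/(x + a + b) - 1/(x + a) - 1/(x + b) + 1/x = 0 leaves a b (2 x + a + b) = 0, so there is
   at most one such zero.  If the square has 0 (resp. 1) as a vertex, translating that vertex
   to the origin turns the equation into a polynomial relation between the sides u = +-a,
   v = +-b, and the relations for two different sign patterns are incompatible, except that
   a vertex at 1 can occur for two adjacent patterns, which forces {a, b} = {+-2, k} with
   k^2 = -1.  A third zero with a vertex at 0 then pins the characteristic to 29 (k = +-12)
   or 37 (k = +-6).  A square through both 0 and 1 has sides satisfying one of three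
   quadratic relations; comparing them with the previous ones leaves at most three zeros
   (in characteristic 3 with a, b = +-1 all zeros lie in the prime field instead).  Hence
   |S| <= 4, with equality only in the two exceptional cases, where four explicit zeros are
   exhibited. *)

Local Notation flip e u := ((-1) ^+ e * u).

Section Flips.
Variable R : comPzRingType.
Implicit Types (x c : R) (s t : bool).

Lemma flip_addb s s' x : flip s' x = flip (s (+) s') (flip s x).
Proof. by rewrite mulrA -signr_addb [s (+) s']addbC addbK. Qed.

Lemma flip_eq0 s x : (flip s x == 0) = (x == 0).
Proof. by rewrite mulr_sign; case: s; rewrite ?oppr_eq0. Qed.

Lemma flip_negb s x : flip (~~ s) x = - flip s x.
Proof. by rewrite signrN mulNr. Qed.

Lemma flip_sqr s x : (flip s x) ^+ 2 = x ^+ 2.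
Proof. by rewrite exprMn sqrr_sign mul1r. Qed.

Lemma flip_pm s x c : flip s x = c \/ flip s x = - c <-> x = c \/ x = - c.
Proof.
rewrite mulr_sign; case: s => //=.
by split=> -[h|h]; [right; rewrite -h opprK | left; apply: oppr_inj | right; rewrite h
  | left; rewrite h opprK].
Qed.

End Flips.

Lemma addb_pair_eq (s t s' t' : bool) : (s (+) s', t (+) t') = (false, false) -> (s, t) = (s', t').
Proof. by case: s; case: s'; case: t; case: t'. Qed.

Lemma addb_pair_cancel (s t s1 t1 s2 t2 : bool) :
  (s (+) s1, t (+) t1) = (s (+) s2, t (+) t2) -> (s1, t1) = (s2, t2).
Proof. by case: s; case: t; case: s1; case: t1; case: s2; case: t2. Qed.

Lemma bool_pairs_compl (s1 t1 s2 t2 s3 t3 : bool) :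
  (s1, t1) != (s2, t2) -> (s2, t2) != (s3, t3) -> (s3, t3) != (s1, t1) ->
  [\/ (s2, t2) = (~~ s1, ~~ t1), (s3, t3) = (~~ s2, ~~ t2) | (s1, t1) = (~~ s3, ~~ t3)].
Proof.
by case: s1; case: t1; case: s2; case: t2; case: s3; case: t3 => //= *;
  first [by constructor 1 | by constructor 2 | by constructor 3].
Qed.

Lemma bool_pairs_adj (s1 t1 s2 t2 : bool) : (s1, t1) != (s2, t2) -> (s2, t2) != (~~ s1, ~~ t1) ->
  (s2, t2) = (~~ s1, t1) \/ (s2, t2) = (s1, ~~ t1).
Proof. by case: s1; case: t1; case: s2; case: t2 => //= *; first [by left | by right]. Qed.

(** * Polynomial relations between the sides of a vanishing square *)

(* The coefficients [c_i] certify that [X - Y] lies in the ideal generated by the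
   [A_i - B_i]; [ring] checks the resulting identity. *)
Section LinearCombination.
Variable R : comPzRingType.

Lemma eq_lincomb1 (c1 A1 B1 X Y : R) : A1 = B1 -> X - Y = c1 * (A1 - B1) -> X = Y.
Proof. by move=> -> /eqP; rewrite subrr mulr0 subr_eq0 => /eqP. Qed.

Lemma eq_lincomb2 (c1 c2 A1 B1 A2 B2 X Y : R) : A1 = B1 -> A2 = B2 ->
  X - Y = c1 * (A1 - B1) + c2 * (A2 - B2) -> X = Y.
Proof. by move=> -> -> /eqP; rewrite !subrr !mulr0 addr0 subr_eq0 => /eqP. Qed.

End LinearCombination.

Arguments eq_lincomb1 {R} c1 {A1 B1 X Y}.
Arguments eq_lincomb2 {R} c1 c2 {A1 B1 A2 B2 X Y}.

Lemma coprime_natf_eq0 (F : fieldType) m n :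
  coprime m n -> m%:R = 0 :> F -> n%:R <> 0 :> F.
Proof.
have [-> | m_gt0] := posnP m.
  by rewrite /coprime gcd0n => /eqP -> _ /eqP; rewrite oner_eq0.
move=> co_mn /eqP m0 /eqP n0; have [p charFp] := natf0_pchar m_gt0 m0.
have : (p %| gcdn m n)%N by rewrite dvdn_gcd !(dvdn_pcharf charFp) m0 n0.
by rewrite (eqP co_mn) dvdn1 => /eqP p1; move: (pcharf_prime charFp); rewrite p1.
Qed.

Section OddCharField.
Variable F : fieldType.
Hypothesis two_neq0 : (2 : F) != 0.

Lemma mul2_eq0 (x : F) : 2 * x = 0 -> x = 0.
Proof. by move/eqP; rewrite mulf_eq0 (negbTE two_neq0) => /eqP. Qed.

Lemma oner_neqN1 : (1 : F) != -1.
Proof.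
apply: contra two_neq0 => /eqP e.
by apply/eqP; apply: (eq_lincomb1 1 e); ring.
Qed.

(* Squares with vertices c, c + u, c + v, c + u + v on which the second difference of
   finv01 vanishes: [corner0] for c = 0 and 1 not a vertex (1 + 1/(u+v) = 1/u + 1/v with
   denominators cleared), [corner1] for c = 1 and 0 not a vertex
   (1/(1+u+v) = 1/(1+u) + 1/(1+v)), [corner01] for c = 0 and 1 a vertex, which is either
   adjacent to 0 (the side case u = 1 or v = 1) or opposite to it (the diagonal case). *)
Definition rel0 (u v : F) := u * v * (u + v + 1) - (u + v) ^+ 2.
Definition rel1 (u v : F) := u * v - (1 + u + v) ^+ 2.

Definition corner0 (u v : F) :=
  [/\ u != 1, v != 1, u + v != 1, u + v != 0 & rel0 u v = 0].
Definition corner1 (u v : F) := [/\ 1 + u != 0, 1 + v != 0, u + v != 0 & rel1 u v = 0].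
Definition corner01 (u v : F) :=
  [\/ u = 1 /\ v ^+ 2 + v = 1, v = 1 /\ u ^+ 2 + u = 1 | u + v = 1 /\ u * v = 1].

Lemma rel0C u v : rel0 u v = rel0 v u. Proof. by rewrite /rel0; ring. Qed.
Lemma rel1C u v : rel1 u v = rel1 v u. Proof. by rewrite /rel1; ring. Qed.

Lemma corner0C u v : corner0 u v -> corner0 v u.
Proof. by case=> u1 v1 s1 s0 h; split; rewrite 1?[v + u]addrC // rel0C. Qed.

Lemma corner1C u v : corner1 u v -> corner1 v u.
Proof. by case=> u1 v1 s0 h; split; rewrite 1?[v + u]addrC // rel1C. Qed.

Lemma corner01C u v : corner01 u v -> corner01 v u.
Proof.
by case=> [[u1 hv]|[v1 hu]|[huv hm]]; [constructor 2 | constructor 1 | constructor 3];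
  rewrite // addrC mulrC.
Qed.

Lemma corner0_sign_uniq u v (e e' : bool) : u != 0 -> v != 0 ->
  corner0 u v -> corner0 (flip e u) (flip e' v) -> (e, e') = (false, false).
Proof.
move=> u0 v0 [u1 v1 _ uv0 h] [_ _ _ _]; move: h; rewrite /rel0 !mulr_sign => h.
have no_zero (w : F) : w != 0 -> 2 * u * v * w = 0 -> False.
  by move=> w0 /eqP; rewrite !mulf_eq0 (negbTE two_neq0) (negbTE u0) (negbTE v0) (negbTE w0).
case: e; case: e' => //= h'.
- by case: (no_zero _ uv0); apply: (eq_lincomb2 1 (-1) h h'); ring.
- have v10 : v - 1 != 0 by rewrite subr_eq0.
  by case: (no_zero _ v10); apply: (eq_lincomb2 1 (-1) h h'); ring.
- have u10 : u - 1 != 0 by rewrite subr_eq0.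
  by case: (no_zero _ u10); apply: (eq_lincomb2 1 (-1) h h'); ring.
Qed.

Lemma corner1_opp u v : corner1 u v -> ~ corner1 (- u) (- v).
Proof.
move=> [_ _ uv0 h] [_ _ _ h']; move: h h'; rewrite /rel1 => h h'.
move/eqP: uv0; apply.
by apply/mul2_eq0/mul2_eq0; apply: (eq_lincomb2 (-1) 1 h h'); ring.
Qed.

Lemma corner1_oppl u v : u != 0 -> corner1 u v -> corner1 (- u) v -> v = -2 /\ u ^+ 2 = -1.
Proof.
move=> u0 [_ _ _ h] [_ _ _ h']; move: h h'; rewrite /rel1 => h h'.
have v2 : v = -2.
  have : 2 * u * (v + 2) = 0 by apply: (eq_lincomb2 (-1) 1 h h'); ring.
  by move/eqP; rewrite !mulf_eq0 (negbTE two_neq0) (negbTE u0) /= addr_eq0 => /eqP.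
by split=> //; move: h; rewrite v2 => h; apply: (eq_lincomb1 (-1) h); ring.
Qed.

Lemma rel0_sqrtN1 k w : k ^+ 2 = -1 -> w = 2 \/ w = -2 -> rel0 k w = 0 ->
  (29 : F) = 0 /\ (k = 12 \/ k = -12) \/ (37 : F) = 0 /\ (k = 6 \/ k = -6).
Proof.
rewrite /rel0 => hk [->|->] h.
- have r : 2 * k = 5 by apply: (eq_lincomb2 1 (-1) h hk); ring.
  have h29 : (29 : F) = 0 by apply: (eq_lincomb2 4 (- (2 * k + 5)) hk r); ring.
  left; split=> //; right; apply: (eq_lincomb2 15 (- (k - 3)) r h29); ring.
- have r : 6 * k = 1 by apply: (eq_lincomb2 1 3 h hk); ring.
  have h37 : (37 : F) = 0 by apply: (eq_lincomb2 36 (- (6 * k + 1)) hk r); ring.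
  right; split=> //; right; apply: (eq_lincomb2 (-6) k r h37); ring.
Qed.

Section SideCase.
Variables u v : F.
Hypotheses (u1 : u = 1) (hv : v ^+ 2 + v = 1).

Lemma side_corner0 (e e' : bool) : corner0 (flip e u) (flip e' v) -> (15 : F) = 0.
Proof.
case; rewrite /rel0 u1 !mulr_sign; case: e; last by rewrite eqxx.
case: e' => /= _ _ _ _ h.
- by apply: (eq_lincomb2 (-5) (-10) h hv); ring.
- have r : 4 * v = 3 by apply: (eq_lincomb2 1 2 h hv); ring.
  have h5 : (5 : F) = 0 by apply: (eq_lincomb2 16 (- (4 * v + 7)) hv r); ring.
  by apply: (eq_lincomb1 3 h5); ring.
Qed.

Lemma side_corner1 (e e' : bool) : corner1 (flip e u) (flip e' v) ->
  e = false /\ (if e' then (29 : F) = 0 else (11 : F) = 0).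
Proof.
case; rewrite /rel1 u1 !mulr_sign; case: e; first by rewrite /= subrr eqxx.
case: e' => /= _ _ _ h; split=> //.
- have r : 4 * v = 5 by apply: (eq_lincomb2 1 1 h hv); ring.
  by apply: (eq_lincomb2 16 (- (4 * v + 9)) hv r); ring.
- have r : 2 * v = -5 by apply: (eq_lincomb2 (-1) (-1) h hv); ring.
  by apply: (eq_lincomb2 4 (- (2 * v - 3)) hv r); ring.
Qed.

Lemma side_corner01 (e e' : bool) : v != 0 ->
  corner01 (flip e u) (flip e' v) -> (e, e') = (false, false).
Proof.
move=> v0; rewrite u1 !mulr_sign.
have one_eq0 : (1 : F) = 0 -> False by move/eqP; rewrite oner_eq0.
case: e; case: e' => /=; case=> -[h1 h2] //; exfalso.
- by move: oner_neqN1; rewrite h1 eqxx.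
- by apply: one_eq0; apply: (eq_lincomb1 (-1) h2); ring.
- by apply: one_eq0; apply: (eq_lincomb2 (- (v + 2)) 1 h2 hv); ring.
- by move: oner_neqN1; rewrite h1 eqxx.
- by apply: one_eq0; apply: (eq_lincomb1 (-1) h2); ring.
- by apply: one_eq0; apply: (eq_lincomb2 (- v) (-1) h2 hv); ring.
- by move/eqP: v0; apply; apply: mul2_eq0; apply: (eq_lincomb2 1 (-1) hv h2); ring.
- by apply: one_eq0; apply: (eq_lincomb1 1 h2); ring.
- by apply: one_eq0; apply: (eq_lincomb2 1 (-1) h1 h2); ring.
Qed.

End SideCase.

Section DiagonalCase.
Variables u v : F.
Hypotheses (huv : u + v = 1) (hm : u * v = 1).

Let v_def : v = 1 - u.
Proof. by rewrite -huv addrC addKr. Qed.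

Let hm' : u * (1 - u) = 1.
Proof. by rewrite -v_def. Qed.

Lemma diagonal_corner0 (e e' : bool) : corner0 (flip e u) (flip e' v) -> (7 : F) = 0.
Proof.
case; rewrite /rel0 v_def !mulr_sign.
case: e; case: e' => /= _ _ s1 _ h.
- by apply: (eq_lincomb1 (-7) h); ring.
- have r : 2 * u = -1 by apply: (eq_lincomb2 1 (-2 * (u + 1)) h hm'); ring.
  by apply: (eq_lincomb2 (- (2 * u - 3)) (-4) r hm'); ring.
- have r : 2 * u = 3 by apply: (eq_lincomb2 (-1) (4 - 2 * u) h hm'); ring.
  by apply: (eq_lincomb2 (- (2 * u + 1)) (-4) r hm'); ring.
- by move: s1; rewrite addrC subrK eqxx.
Qed.

Lemma diagonal_corner1 (e e' : bool) : corner1 (flip e u) (flip e' v) ->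
  [\/ (e, e') = (false, false) /\ (3 : F) = 0,
      (e, e') = (false, true) /\ (13 : F) = 0 /\ 4 * u = 3
    | (e, e') = (true, false) /\ (13 : F) = 0 /\ 4 * u = 1].
Proof.
case; rewrite /rel1 v_def !mulr_sign.
case: e; case: e' => /= _ _ _ h.
- have : (1 : F) = 0 by apply: (eq_lincomb2 1 (-1) h hm'); ring.
  by move/eqP; rewrite oner_eq0.
- have r : 4 * u = 1 by apply: (eq_lincomb2 1 (-3) h hm'); ring.
  by constructor 3; do 2!split=> //; apply: (eq_lincomb2 (- (4 * u - 3)) (-16) r hm'); ring.
- have r : 4 * u = 3 by apply: (eq_lincomb2 (-1) 3 h hm'); ring.
  by constructor 2; do 2!split=> //; apply: (eq_lincomb2 (- (4 * u - 1)) (-16) r hm'); ring.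
- by constructor 1; split=> //; apply: (eq_lincomb2 (-1) 1 h hm'); ring.
Qed.

Lemma diagonal_corner01 (e e' : bool) : corner01 (flip e u) (flip e' v) -> (e, e') = (false, false).
Proof.
rewrite v_def !mulr_sign.
have one_eq0 : (1 : F) = 0 -> False by move/eqP; rewrite oner_eq0.
case: e; case: e' => /=; case=> -[h1 h2] //; exfalso.
- by apply: one_eq0; apply: (eq_lincomb2 (u - 2) 1 h1 h2); ring.
- by apply: one_eq0; apply: (eq_lincomb2 (- (u + 1)) 1 h1 h2); ring.
- by move/eqP: two_neq0; apply; apply: (eq_lincomb1 (-1) h1); ring.
- have u_1 : u = -1 by rewrite -[u]opprK h1.
  move: hm' h2; rewrite u_1 => hm1 h2.
  by apply: one_eq0; apply: (eq_lincomb2 (-2) (-1) hm1 h2); ring.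
- by apply: one_eq0; apply: (eq_lincomb2 (u - 1) (-1) h1 hm'); ring.
- by move/eqP: two_neq0; apply; apply: (eq_lincomb2 (-1) (-1) h2 hm'); ring.
- by apply: one_eq0; apply: (eq_lincomb2 (- u) (-1) h1 hm'); ring.
- have u2 : u = 2 by apply: (eq_lincomb1 1 h1); ring.
  move: hm' h2; rewrite u2 => hm2 h2.
  by apply: one_eq0; apply: (eq_lincomb2 (-2) (-1) hm2 h2); ring.
- by move/eqP: two_neq0; apply; apply: (eq_lincomb2 (-1) (-1) h2 hm'); ring.
Qed.

End DiagonalCase.

Lemma corner01_sign_uniq u v (e e' : bool) : u != 0 -> v != 0 ->
  corner01 u v -> corner01 (flip e u) (flip e' v) -> (e, e') = (false, false).
Proof.
move=> u0 v0 [[u1 hv]|[v1 hu]|[huv hm]] h.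
- by apply: (side_corner01 u1 hv).
- by case: (side_corner01 v1 hu u0 (corner01C h)) => -> ->.
- exact: (diagonal_corner01 huv hm).
Qed.

Lemma corner01_corner1_sign_uniq u v (e1 e1' e2 e2' : bool) : corner01 u v ->
  corner1 (flip e1 u) (flip e1' v) -> corner1 (flip e2 u) (flip e2' v) -> (e1, e1') = (e2, e2').
Proof.
have side x y (d1 d1' d2 d2' : bool) : x = 1 -> y ^+ 2 + y = 1 ->
    corner1 (flip d1 x) (flip d1' y) -> corner1 (flip d2 x) (flip d2' y) -> (d1, d1') = (d2, d2').
  move=> x1 hy /(side_corner1 x1 hy) [-> h1] /(side_corner1 x1 hy) [-> h2].
  by case: d1' d2' h1 h2 => -[] // h1 h2; case: (coprime_natf_eq0 _ h1 h2).
case=> [[u1 hv]|[v1 hu]|[huv hm]] h1 h2.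
- exact: side u1 hv h1 h2.
- by case: (side _ _ _ _ _ _ v1 hu (corner1C h1) (corner1C h2)) => -> ->.
have [[-> h3]|[-> [h13 r]]|[-> [h13 r]]] := diagonal_corner1 huv hm h1;
have [[-> h3']|[-> [h13' r']]|[-> [h13' r']]] := diagonal_corner1 huv hm h2 => //; exfalso.
- exact: coprime_natf_eq0 _ h3 h13'.
- exact: coprime_natf_eq0 _ h3 h13'.
- exact: coprime_natf_eq0 _ h3' h13.
- by move/eqP: two_neq0; apply; apply: (eq_lincomb2 (-1) 1 r r'); ring.
- exact: coprime_natf_eq0 _ h3' h13.
- by move/eqP: two_neq0; apply; apply: (eq_lincomb2 1 (-1) r r'); ring.
Qed.

Lemma corner01_corner0_corner1 u v (e1 e1' e2 e2' : bool) : corner01 u v ->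
  corner0 (flip e1 u) (flip e1' v) -> ~ corner1 (flip e2 u) (flip e2' v).
Proof.
have side x y (d1 d1' d2 d2' : bool) : x = 1 -> y ^+ 2 + y = 1 ->
    corner0 (flip d1 x) (flip d1' y) -> ~ corner1 (flip d2 x) (flip d2' y).
  move=> x1 hy /(side_corner0 x1 hy) h15 /(side_corner1 x1 hy) [_].
  by case: d2' => h; apply: coprime_natf_eq0 h15 h.
case=> [[u1 hv]|[v1 hu]|[huv hm]] h1 h2.
- exact: side u1 hv h1 h2.
- exact: side v1 hu (corner0C h1) (corner1C h2).
have h7 := diagonal_corner0 huv hm h1.
by case: (diagonal_corner1 huv hm h2) => [[_ h]|[_ [h _]]|[_ [h _]]]; apply: coprime_natf_eq0 h7 h.
Qed.

End OddCharField.

(** * Squares and second differences *)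

Section Squares.
Variable R : comPzRingType.
Implicit Types (f : R -> R) (a b c x y : R).

Definition d2 f a b x := f (x + a + b) - f (x + a) - f (x + b) + f x.
Definition on_square c a b x := [|| x == c, x + a == c, x + b == c | x + a + b == c].
(* The point whose square has the vertex [c] at offset [s * a + t * b]. *)
Definition corner c a b (s t : bool) := c - (if s then a else 0) - (if t then b else 0).

Lemma d2C f a b x : d2 f a b x = d2 f b a x.
Proof. by rewrite /d2 [x + b + a]addrAC; ring. Qed.

Lemma d2_subr f a b x : d2 f a b (x - a) = - d2 f (- a) b x.
Proof. by rewrite /d2 subrK; ring. Qed.

Lemma on_squareC c a b x : on_square c a b x = on_square c b a x.
Proof.
rewrite /on_square [x + b + a]addrAC.
by case: (x == c); case: (x + a == c); case: (x + b == c).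
Qed.

Lemma on_square_subr c a b x : on_square c a b (x - a) = on_square c (- a) b x.
Proof.
rewrite /on_square subrK.
by case: (x == c); case: (x - a == c); case: (x + b == c); case: (x - a + b == c).
Qed.

Lemma d2_corner f c a b (s t : bool) :
  d2 f a b (corner c a b s t) = (-1) ^+ (s (+) t) * d2 f (flip s a) (flip t b) c.
Proof.
rewrite /corner !mulr_sign; case: s; case: t; rewrite /= ?subr0 //.
- by rewrite d2C d2_subr d2C d2_subr opprK.
- by rewrite d2_subr.
- by rewrite d2C d2_subr d2C.
Qed.

Lemma d2_corner_eq0 f c a b (s t : bool) :
  (d2 f a b (corner c a b s t) == 0) = (d2 f (flip s a) (flip t b) c == 0).
Proof. by rewrite d2_corner mulr_sign; case: (s (+) t); rewrite ?oppr_eq0. Qed.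

Lemma on_square_corner y c a b (s t : bool) :
  on_square y a b (corner c a b s t) = on_square y (flip s a) (flip t b) c.
Proof.
rewrite /corner !mulr_sign; case: s; case: t; rewrite /= ?subr0 //.
- by rewrite on_squareC on_square_subr on_squareC on_square_subr.
- by rewrite on_square_subr.
- by rewrite on_squareC on_square_subr on_squareC.
Qed.

Lemma on_square_cornerP c a b x : on_square c a b x -> exists s t, x = corner c a b s t.
Proof.
rewrite /corner => /or4P[] /eqP <-.
- by exists false, false; rewrite /= !subr0.
- by exists true, false; rewrite /= subr0 addrK.
- by exists false, true; rewrite /= subr0 addrK.
- by exists true, true; rewrite /= addrAC addrK addrK.
Qed.

End Squares.

Lemma addr1_neq1 (R : pzRingType) (u : R) : u != 0 -> 1 + u != 1.
Proof. by move=> u0; rewrite -subr_eq0 [1 + u]addrC addrK. Qed.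

Section InverseTransposition.
Variable F : finFieldType.
Hypothesis two_neq0 : (2 : F) != 0.
Local Notation f := (@finv01 F).

Lemma finv010 : f 0 = 1. Proof. by rewrite /finv01 eqxx. Qed.
Lemma finv011 : f 1 = 0. Proof. by rewrite /finv01 oner_eq0 eqxx. Qed.
Lemma finv01E y : y != 0 -> y != 1 -> f y = y^-1.
Proof. by rewrite /finv01 => /negPf -> /negPf ->. Qed.

Lemma d2_finv01_generic a b x : a != 0 -> b != 0 ->
  ~~ on_square 0 a b x -> ~~ on_square 1 a b x -> d2 f a b x = 0 -> 2 * x + a + b = 0.
Proof.
rewrite /on_square !negb_or => a0 b0 /and4P[x0 xa0 xb0 xab0] /and4P[x1 xa1 xb1 xab1].
rewrite /d2 (finv01E xab0 xab1) (finv01E xa0 xa1) (finv01E xb0 xb1) (finv01E x0 x1) => h.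
have : a * b * (2 * x + a + b) = 0.
  apply: (eq_lincomb1 (x * (x + a) * (x + b) * (x + a + b)) h); field.
  by rewrite x0 xa0 xb0 xab0.
by move/eqP; rewrite !mulf_eq0 (negbTE a0) (negbTE b0) => /eqP.
Qed.

Lemma d2_finv01_corner0 u v : u != 0 -> v != 0 ->
  ~~ on_square 1 u v 0 -> d2 f u v 0 = 0 -> corner0 u v.
Proof.
rewrite /on_square /d2 !add0r !negb_or finv010 => u0 v0 /and4P[_ u1 v1 s1].
rewrite (finv01E u0 u1) (finv01E v0 v1).
have [s0|s0] := eqVneq (u + v) 0.
  have -> : v = - u by apply/eqP; rewrite -addr_eq0 addrC s0.
  rewrite subrr finv010 invrN => h; exfalso; move/eqP: two_neq0; apply.
  by apply: (eq_lincomb1 1 h); ring.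
rewrite (finv01E s0 s1) => h; split=> //.
rewrite /rel0; apply: (eq_lincomb1 (u * v * (u + v)) h); field.
by rewrite u0 v0 s0.
Qed.

Lemma d2_finv01_corner1 u v : u != 0 -> v != 0 ->
  ~~ on_square 0 u v 1 -> d2 f u v 1 = 0 -> corner1 u v.
Proof.
rewrite /on_square /d2 !negb_or finv011 addr0 => u0 v0 /and4P[_ hu hv hs].
rewrite (finv01E hu (addr1_neq1 u0)) (finv01E hv (addr1_neq1 v0)).
have [s0|s0] := eqVneq (u + v) 0.
  rewrite -[1 + u + v]addrA s0 addr0 finv011 => h; exfalso; move/eqP: two_neq0; apply.
  apply: (eq_lincomb2 (- ((1 + u) * (1 + v))) (-1) h s0); field.
  by rewrite hu hv.
have s1 : 1 + u + v != 1 by rewrite -addrA addr1_neq1.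
rewrite (finv01E hs s1) => h; split=> //.
rewrite /rel1; apply: (eq_lincomb1 ((1 + u) * (1 + v) * (1 + u + v)) h); field.
by rewrite hu hv hs.
Qed.

Lemma d2_finv01_side v : v != 0 -> d2 f 1 v 0 = 0 ->
  v ^+ 2 + v = 1 \/ (3 : F) = 0 /\ (v = 1 \/ v = -1).
Proof.
rewrite /d2 !add0r finv010 finv011 subr0 => v0.
have [->|v1] := eqVneq v 1.
  have two1 : (1 + 1 : F) != 1 by rewrite addr1_neq1 ?oner_neq0.
  have two0 : (1 + 1 : F) != 0 by rewrite -mulr2n.
  rewrite (finv01E two0 two1) finv011 subr0 => h; right; split; last by left.
  by apply: (eq_lincomb1 2 h); field.
have [->|vN1] := eqVneq v (-1).
  have m1_0 : (-1 : F) != 0 by rewrite oppr_eq0 oner_neq0.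
  have m1_1 : (-1 : F) != 1 by rewrite eq_sym oner_neqN1.
  rewrite subrr finv010 (finv01E m1_0 m1_1) invrN1 => h; right.
  by split; [apply: (eq_lincomb1 1 h); ring | right].
have hv : 1 + v != 0 by rewrite addr_eq0 eq_sym eqr_oppLR.
rewrite (finv01E hv (addr1_neq1 v0)) (finv01E v0 v1) => h; left.
apply: (eq_lincomb1 (v * (1 + v)) h); field.
by rewrite v0 hv.
Qed.

Lemma d2_finv01_corner01 u v : u != 0 -> v != 0 -> on_square 1 u v 0 -> d2 f u v 0 = 0 ->
  corner01 u v \/ [/\ (3 : F) = 0, u = 1 \/ u = -1 & v = 1 \/ v = -1].
Proof.
move=> u0 v0; rewrite /on_square !add0r eq_sym oner_eq0 /= => hit h.
have [u1|u1] := eqVneq u 1.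
  move: h; rewrite u1 => /(d2_finv01_side v0) [hv|[h3 hv]].
    by left; constructor 1.
  by right; split=> //; left.
have [v1|v1] := eqVneq v 1.
  move: h; rewrite d2C v1 => /(d2_finv01_side u0) [hu|[h3 hu]].
    by left; constructor 2.
  by right; split=> //; left.
have huv : u + v = 1 by move: hit; rewrite (negbTE u1) (negbTE v1) /= => /eqP.
left; constructor 3; split=> //.
move: h; rewrite /d2 !add0r huv finv010 finv011 (finv01E u0 u1) (finv01E v0 v1) => h.
apply: (eq_lincomb2 (u * v) 1 h huv); field.
by rewrite u0 v0.
Qed.

End InverseTransposition.

(** * Counting the zeros *)

Lemma mem_F3D (R : comPzRingType) (x y : R) : 3 = 0 :> R ->
  x \in [:: 0; 1; -1] -> y \in [:: 0; 1; -1] -> x + y \in [:: 0; 1; -1].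
Proof.
move=> h3; have e2 : 1 + 1 = -1 :> R by apply: (eq_lincomb1 1 h3); ring.
have eN2 : -1 + -1 = 1 :> R by rewrite -opprD e2 opprK.
rewrite !inE => /or3P[] /eqP -> /or3P[] /eqP ->;
  by rewrite ?add0r ?addr0 ?e2 ?eN2 ?subrr ?addNr eqxx ?orbT.
Qed.

Lemma mem_F3N (R : pzRingType) (x : R) : x \in [:: 0; 1; -1] -> - x \in [:: 0; 1; -1].
Proof. by rewrite !inE => /or3P[] /eqP ->; rewrite ?oppr0 ?opprK eqxx ?orbT. Qed.

Definition exceptional_pair (F : finFieldType) (a b : F) :=
     (29 : F) = 0 /\ ((pm 2 a /\ pm 12 b) \/ (pm 12 a /\ pm 2 b))
  \/ (37 : F) = 0 /\ ((pm 2 a /\ pm 6 b) \/ (pm 6 a /\ pm 2 b)).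

Section Counting.
Variables (F : finFieldType) (a b : F).
Hypotheses (two_neq0 : (2 : F) != 0) (a0 : a != 0) (b0 : b != 0).
Local Notation f := (@finv01 F).
Local Notation S := [set x : F | d2 f a b x == 0].
Local Notation H0 := [set x : F | on_square 0 a b x].
Local Notation H1 := [set x : F | on_square 1 a b x].
Local Notation char3_signs := [&& 3 == 0 :> F, a \in [:: 1; -1] & b \in [:: 1; -1]].

Let flipa_neq0 (s : bool) : flip s a != 0. Proof. by rewrite flip_eq0. Qed.
Let flipb_neq0 (t : bool) : flip t b != 0. Proof. by rewrite flip_eq0. Qed.

Lemma card_zeros_split :
  #|S| = (#|S :\: H0 :\: H1| + #|S :&: H0 :\: H1| + #|(S :\: H0) :&: H1| + #|S :&: H0 :&: H1|)%N.
Proof.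
rewrite -(cardsID H0 S) -(cardsID H1 (S :&: H0)) -(cardsID H1 (S :\: H0)).
by ring.
Qed.

Lemma zeros_corner c x : d2 f a b x == 0 -> on_square c a b x ->
  exists s t, [/\ x = corner c a b s t, d2 f (flip s a) (flip t b) c = 0 &
    forall y, on_square y a b x = on_square y (flip s a) (flip t b) c].
Proof.
move=> hx /on_square_cornerP[s [t ex]]; exists s, t; split=> //.
  by apply/eqP; rewrite -d2_corner_eq0 -ex.
by move=> y; rewrite ex on_square_corner.
Qed.

Lemma generic_zero x : x \in S :\: H0 :\: H1 -> 2 * x + a + b = 0.
Proof. by rewrite !inE => /and3P[n1 n0 /eqP hx]; apply: d2_finv01_generic. Qed.

Lemma corner0_zero x : x \in S :&: H0 :\: H1 ->
  exists s t, x = corner 0 a b s t /\ corner0 (flip s a) (flip t b).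
Proof.
rewrite !inE => /and3P[n1 hx h0].
have [s [t [ex hd hsq]]] := zeros_corner hx h0.
exists s, t; split=> //.
by apply: d2_finv01_corner0 => //; rewrite ?flip_eq0 // -hsq.
Qed.

Lemma corner1_zero x : x \in (S :\: H0) :&: H1 ->
  exists s t, x = corner 1 a b s t /\ corner1 (flip s a) (flip t b).
Proof.
rewrite !inE => /andP[/andP[n0 hx] h1].
have [s [t [ex hd hsq]]] := zeros_corner hx h1.
exists s, t; split=> //.
by apply: d2_finv01_corner1 => //; rewrite ?flip_eq0 // -hsq.
Qed.

Lemma corner01_zero x : x \in S :&: H0 :&: H1 -> ~~ char3_signs ->
  exists s t, x = corner 0 a b s t /\ corner01 (flip s a) (flip t b).
Proof.
rewrite !inE => /andP[/andP[hx h0] h1] nsp.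
have [s [t [ex hd hsq]]] := zeros_corner hx h0.
exists s, t; split=> //; rewrite hsq in h1.
have [//|[h3 ha hb]] := d2_finv01_corner01 two_neq0 (flipa_neq0 s) (flipb_neq0 t) h1 hd.
case/negP: nsp; apply/and3P; split; first by rewrite h3.
  by case/flip_pm: ha => ->; rewrite eqxx ?orbT.
by case/flip_pm: hb => ->; rewrite eqxx ?orbT.
Qed.

Lemma corner_signs_neq c (s t s' t' : bool) :
  corner c a b s t != corner c a b s' t' -> (s, t) != (s', t').
Proof. by apply: contra => /eqP[-> ->]. Qed.

Lemma card_generic_le1 : (#|S :\: H0 :\: H1| <= 1)%N.
Proof.
apply/card_le1_eqP => x y /generic_zero hx /generic_zero hy.
by apply/subr0_eq/(mul2_eq0 two_neq0); apply: (eq_lincomb2 (-1) 1 hx hy); ring.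
Qed.

Lemma card_corner0_le1 : (#|S :&: H0 :\: H1| <= 1)%N.
Proof.
apply/card_le1_eqP => x y /corner0_zero[s [t [-> hx]]] /corner0_zero[s' [t' [-> hy]]].
rewrite (flip_addb s s') (flip_addb t t') in hy.
have := corner0_sign_uniq two_neq0 (flipa_neq0 s) (flipb_neq0 t) hx hy.
by case/addb_pair_eq => -> ->.
Qed.

Lemma corner1_zero_negb (s t : bool) :
  corner1 (flip s a) (flip t b) -> ~ corner1 (flip (~~ s) a) (flip (~~ t) b).
Proof. by rewrite !flip_negb; apply: corner1_opp. Qed.

Lemma card_corner1_le2 : (#|(S :\: H0) :&: H1| <= 2)%N.
Proof.
rewrite leqNgt; apply/negP => /card_gt2P[x [y [z [[hx hy hz] [dxy dyz dzx]]]]].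
have [s1 [t1 [ex h1]]] := corner1_zero hx; have [s2 [t2 [ey h2]]] := corner1_zero hy.
have [s3 [t3 [ez h3]]] := corner1_zero hz; subst x y z.
have := bool_pairs_compl (corner_signs_neq dxy) (corner_signs_neq dyz) (corner_signs_neq dzx).
by case=> -[? ?]; subst; [exact: corner1_zero_negb h1 h2 | exact: corner1_zero_negb h2 h3
  | exact: corner1_zero_negb h3 h1].
Qed.

Lemma corner1_two : (1 < #|(S :\: H0) :&: H1|)%N ->
  (b = 2 \/ b = -2) /\ a ^+ 2 = -1 \/ (a = 2 \/ a = -2) /\ b ^+ 2 = -1.
Proof.
move=> /card_gt1P[x [y [hx hy dxy]]].
have [s1 [t1 [ex h1]]] := corner1_zero hx; have [s2 [t2 [ey h2]]] := corner1_zero hy.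
subst x y; have ncompl : (s2, t2) != (~~ s1, ~~ t1).
  by apply/eqP => -[e1 e2]; move: h2; rewrite e1 e2; apply: corner1_zero_negb.
case: (bool_pairs_adj (corner_signs_neq dxy) ncompl) => -[? ?]; subst.
- rewrite flip_negb in h2.
  have [hb ha] := corner1_oppl two_neq0 (flipa_neq0 s1) h1 h2.
  by left; rewrite -(flip_sqr s1) -(flip_pm t1) hb; split=> //; right.
- rewrite flip_negb in h2.
  have [ha hb] := corner1_oppl two_neq0 (flipb_neq0 t1) (corner1C h1) (corner1C h2).
  by right; rewrite -(flip_sqr t1) -(flip_pm s1) ha; split=> //; right.
Qed.

Lemma corner_zeros_exceptional :
  (1 < #|(S :\: H0) :&: H1|)%N -> (0 < #|S :&: H0 :\: H1|)%N -> exceptional_pair a b.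
Proof.
move=> /corner1_two hab /card_gt0P[x /corner0_zero[s [t [_ [_ _ _ _ h0]]]]].
case: hab => [[hb ha]|[ha hb]].
- rewrite -(flip_sqr s) in ha; rewrite -(flip_pm t) in hb.
  case: (rel0_sqrtN1 ha hb h0) => -[hp /flip_pm hk];
    [left | right]; split=> //; right; split=> //; exact/(flip_pm t).
- rewrite -(flip_sqr t) in hb; rewrite -(flip_pm s) in ha; rewrite rel0C in h0.
  case: (rel0_sqrtN1 hb ha h0) => -[hp /flip_pm hk];
    [left | right]; split=> //; left; split=> //; exact/(flip_pm s).
Qed.

Lemma card_corner01_le1 : ~~ char3_signs -> (#|S :&: H0 :&: H1| <= 1)%N.
Proof.
move=> nsp; apply/card_le1_eqP => x y.
move=> /corner01_zero/(_ nsp)[s [t [-> hx]]] /corner01_zero/(_ nsp)[s' [t' [-> hy]]].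
rewrite (flip_addb s s') (flip_addb t t') in hy.
by case/addb_pair_eq: (corner01_sign_uniq two_neq0 (flipa_neq0 s) (flipb_neq0 t) hx hy) => -> ->.
Qed.

Lemma card_corner1_le1 : ~~ char3_signs -> (0 < #|S :&: H0 :&: H1|)%N ->
  (#|(S :\: H0) :&: H1| <= 1)%N.
Proof.
move=> nsp /card_gt0P[z /corner01_zero/(_ nsp)[s [t [_ hz]]]].
apply/card_le1_eqP => x y /corner1_zero[s1 [t1 [-> hx]]] /corner1_zero[s2 [t2 [-> hy]]].
rewrite (flip_addb s s1) (flip_addb t t1) in hx; rewrite (flip_addb s s2) (flip_addb t t2) in hy.
by case/addb_pair_cancel: (corner01_corner1_sign_uniq two_neq0 hz hx hy) => -> ->.
Qed.

Lemma corner_zeros_excl : ~~ char3_signs -> (0 < #|S :&: H0 :&: H1|)%N ->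
  (0 < #|S :&: H0 :\: H1|)%N -> (0 < #|(S :\: H0) :&: H1|)%N -> False.
Proof.
move=> nsp /card_gt0P[z /corner01_zero/(_ nsp)[s [t [_ hz]]]].
move=> /card_gt0P[x /corner0_zero[s1 [t1 [_ hx]]]] /card_gt0P[y /corner1_zero[s2 [t2 [_ hy]]]].
rewrite (flip_addb s s1) (flip_addb t t1) in hx; rewrite (flip_addb s s2) (flip_addb t t2) in hy.
exact: corner01_corner0_corner1 hz hx hy.
Qed.

(* In characteristic 3 with a, b = +-1 every zero lies in the prime field {0, 1, -1}. *)
Lemma card_zeros_char3 : char3_signs -> (#|S| <= 3)%N.
Proof.
case/and3P => /eqP h3 ha hb.
have ha' : a \in [:: 0; 1; -1] by rewrite inE ha orbT.
have hb' : b \in [:: 0; 1; -1] by rewrite inE hb orbT.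
have F3_corner c (s t : bool) : c \in [:: 0; 1; -1] -> corner c a b s t \in [:: 0; 1; -1].
  move=> hc; rewrite /corner.
  by apply: mem_F3D h3 (mem_F3D h3 hc _) _; apply: mem_F3N; case: s t => -[] //=; rewrite inE eqxx.
apply: leq_trans (subset_leq_card (_ : S \subset [:: 0; 1; -1])) (card_size _).
apply/subsetP => x; rewrite inE => /eqP hx.
case h0: (on_square 0 a b x).
  by have [s [t ->]] := on_square_cornerP h0; apply: F3_corner; rewrite inE eqxx.
case h1: (on_square 1 a b x).
  by have [s [t ->]] := on_square_cornerP h1; apply: F3_corner; rewrite !inE eqxx orbT.
have hg := d2_finv01_generic a0 b0 (negbT h0) (negbT h1) hx.
have -> : x = a + b by apply: (eq_lincomb2 (-1) x hg h3); ring.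
exact: mem_F3D.
Qed.

Lemma card_zeros : (#|S| <= 4)%N /\ (#|S| = 4%N -> exceptional_pair a b).
Proof.
have [/card_zeros_char3 le3|nsp] := boolP char3_signs.
  by split=> [|h4]; [apply: leq_trans le3 _ | move: le3; rewrite h4].
rewrite card_zeros_split.
have := card_generic_le1; have := card_corner0_le1; have := card_corner1_le2.
have [->|S01_gt0] := posnP #|S :&: H0 :&: H1|.
  by move=> *; split=> [|h4]; [lia | apply: corner_zeros_exceptional; lia].
have := card_corner01_le1 nsp; have := card_corner1_le1 nsp S01_gt0.
have [->|S0_gt0] := posnP #|S :&: H0 :\: H1|; first by move=> *; split=> [|h4]; lia.
have [->|S1_gt0] := posnP #|(S :\: H0) :&: H1|; first by move=> *; split=> [|h4]; lia.
by case: (corner_zeros_excl nsp S01_gt0 S0_gt0 S1_gt0).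
Qed.

End Counting.

(** * The exceptional pairs *)

Section NablaSymmetries.
Variables (F : finFieldType) (f : F -> F).

Lemma nabla_d2 a b : nabla f a b = #|[set x | d2 f a b x == 0]|.
Proof. by []. Qed.

Lemma nablaC a b : nabla f a b = nabla f b a.
Proof. by rewrite !nabla_d2; apply: eq_card => x; rewrite !inE d2C. Qed.

Lemma nabla_oppl a b : nabla f (- a) b = nabla f a b.
Proof.
rewrite !nabla_d2 -[RHS](card_preimset _ (addIr (- a))).
by apply: eq_card => x; rewrite !inE d2_subr oppr_eq0.
Qed.

Lemma nabla_oppr a b : nabla f a (- b) = nabla f a b.
Proof. by rewrite nablaC nabla_oppl nablaC. Qed.

Lemma nabla_pm m n a b : pm m a -> pm n b -> nabla f a b = nabla f m%:R n%:R.
Proof. by case=> ->; case=> ->; rewrite ?nabla_oppl ?nabla_oppr. Qed.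

Lemma nabla0l b : nabla f 0 b = #|F|.
Proof.
by rewrite nabla_d2 -cardsT; apply: eq_card => x; rewrite !inE /d2 !addr0; apply/eqP; ring.
Qed.

End NablaSymmetries.

Section PrimeSubfield.
Variables (F : finFieldType) (p : nat).
Hypothesis charFp : p \in [pchar F].
Local Notation f := (@finv01 F).

Lemma natr_eq_mod m n : (m%:R == n%:R :> F) = (m == n %[mod p])%N.
Proof.
wlog le_mn : m n / (m <= n)%N.
  by move=> ih; case/orP: (leq_total m n) => /ih //; rewrite eq_sym => ->; rewrite eq_sym.
by rewrite [RHS]eq_sym eqn_mod_dvd // (dvdn_pcharf charFp) natrB // subr_eq0 eq_sym.
Qed.

Definition finv01_modn n k :=
  (if n %% p == 0 then k == 1 else if n == 1 %[mod p] then k == 0 else n * k == 1 %[mod p])%N.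

Lemma finv01_natr n k : finv01_modn n k -> f n%:R = k%:R.
Proof.
have e0 : (n%:R == 0 :> F) = (n %% p == 0)%N by rewrite -(mod0n p); exact: (natr_eq_mod n 0).
rewrite /finv01_modn /finv01 e0 (natr_eq_mod n 1).
case: ifP => [_ /eqP -> // | n0]; case: ifP => [_ /eqP -> // | _ nk].
have n0F : n%:R != 0 :> F by rewrite e0 n0.
apply: (mulfI n0F); rewrite mulfV // -natrM; apply/esym/eqP.
by rewrite (natr_eq_mod (n * k) 1).
Qed.

Lemma d2_finv01_natr a b x k1 k2 k3 k4 :
  finv01_modn (x + a + b) k1 -> finv01_modn (x + a) k2 -> finv01_modn (x + b) k3 ->
  finv01_modn x k4 -> (k1 + k4 == k2 + k3 %[mod p])%N -> d2 f a%:R b%:R x%:R = 0.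
Proof.
move=> /finv01_natr h1 /finv01_natr h2 /finv01_natr h3 /finv01_natr h4 hk.
rewrite /d2 -!natrD h1 h2 h3 h4.
have : (k1 + k4)%:R = (k2 + k3)%:R :> F by apply/eqP; rewrite natr_eq_mod.
by rewrite !natrD => e; apply: (eq_lincomb1 1 e); ring.
Qed.

End PrimeSubfield.

Section Witnesses.
Variable F : finFieldType.
Local Notation f := (@finv01 F).

(* Each [k_i] is the value of finv01 at [x + a + b], [x + a], [x + b], [x] modulo p. *)
Lemma nabla_finv01_2_12 : 29 \in [pchar F] -> nabla f 2 12 = 4%N.
Proof.
move=> ch; have n0 k : (0 < k < 29)%N -> k%:R != 0 :> F.
  by rewrite -(dvdn_pcharf ch) => /andP[k0 k29]; rewrite gtnNdvd.
apply/eqP; rewrite eqn_leq (card_zeros (n0 2 isT) (n0 2 isT) (n0 12 isT)).1 /=.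
apply/card_geqP; exists [:: 16%:R; 17%:R; 22%:R; 28%:R]; split=> //.
  by rewrite /= !inE !(natr_eq_mod ch).
move=> x; rewrite !inE => /or4P[] /eqP -> ; apply/eqP.
- by apply: (d2_finv01_natr ch (k1 := 0) (k2 := 21) (k3 := 28) (k4 := 20)).
- by apply: (d2_finv01_natr ch (k1 := 15) (k2 := 26) (k3 := 1) (k4 := 12)).
- by apply: (d2_finv01_natr ch (k1 := 25) (k2 := 23) (k3 := 6) (k4 := 4)).
- by apply: (d2_finv01_natr ch (k1 := 9) (k2 := 0) (k3 := 8) (k4 := 28)).
Qed.

Lemma nabla_finv01_2_6 : 37 \in [pchar F] -> nabla f 2 6 = 4%N.
Proof.
move=> ch; have n0 k : (0 < k < 37)%N -> k%:R != 0 :> F.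
  by rewrite -(dvdn_pcharf ch) => /andP[k0 k37]; rewrite gtnNdvd.
apply/eqP; rewrite eqn_leq (card_zeros (n0 2 isT) (n0 2 isT) (n0 6 isT)).1 /=.
apply/card_geqP; exists [:: 29%:R; 30%:R; 33%:R; 36%:R]; split=> //.
  by rewrite /= !inE !(natr_eq_mod ch).
move=> x; rewrite !inE => /or4P[] /eqP -> ; apply/eqP.
- by apply: (d2_finv01_natr ch (k1 := 1) (k2 := 6) (k3 := 18) (k4 := 23)).
- by apply: (d2_finv01_natr ch (k1 := 0) (k2 := 22) (k3 := 36) (k4 := 21)).
- by apply: (d2_finv01_natr ch (k1 := 28) (k2 := 18) (k3 := 19) (k4 := 9)).
- by apply: (d2_finv01_natr ch (k1 := 16) (k2 := 0) (k3 := 15) (k4 := 36)).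
Qed.

End Witnesses.

Definition exceptional_char (F : finFieldType) (p : nat) (a b : F) :=
     (p = 29%N /\ ((pm 2 a /\ pm 12 b) \/ (pm 12 a /\ pm 2 b)))
  \/ (p = 37%N /\ ((pm 2 a /\ pm 6 b) \/ (pm 6 a /\ pm 2 b))).

Section Characterisation.
Variables (F : finFieldType) (p : nat).
Hypotheses (charFp : p \in [pchar F]) (odd_p : odd p).
Local Notation f := (@finv01 F).

Let two_neq0 : (2 : F) != 0.
Proof.
rewrite -(dvdn_pcharf charFp) dvdn_prime2 ?(pcharf_prime charFp) //.
by apply: contraTneq odd_p => ->.
Qed.

Lemma pchar_natr_eq0 q : prime q -> q%:R = 0 :> F -> p = q.
Proof.
move=> pr_q /eqP; rewrite -(dvdn_pcharf charFp).
by rewrite dvdn_prime2 ?(pcharf_prime charFp) // => /eqP.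
Qed.

Lemma nabla_finv01_le4 a b : a != 0 -> b != 0 -> (nabla f a b <= 4)%N.
Proof. by move=> a0 b0; rewrite (card_zeros two_neq0 a0 b0).1. Qed.

Lemma nabla_finv01_eq4 a b : a != 0 -> b != 0 -> nabla f a b = 4%N -> exceptional_char p a b.
Proof.
move=> a0 b0 /(card_zeros two_neq0 a0 b0).2 [[/pchar_natr_eq0 h hab]|[/pchar_natr_eq0 h hab]].
  by left; split=> //; apply: h.
by right; split=> //; apply: h.
Qed.

Lemma exceptional_nabla_finv01 a b : exceptional_char p a b -> nabla f a b = 4%N.
Proof.
case=> -[hp [[ha hb]|[ha hb]]];
  rewrite (nabla_pm _ ha hb) ?[nabla _ 12 _]nablaC ?[nabla _ 6 _]nablaC;
  (first [apply: nabla_finv01_2_12 | apply: nabla_finv01_2_6]); by move: (charFp); rewrite hp.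
Qed.

End Characterisation.

Lemma nablaU_le (F : finFieldType) (f : F -> F) n :
  (forall a b, a != 0 -> b != 0 -> (nabla f a b <= n)%N) -> (nablaU f <= n)%N.
Proof. by move=> h; apply/bigmax_leqP => a a0; apply/bigmax_leqP => b b0; apply: h. Qed.

Lemma nabla_le_nablaU (F : finFieldType) (f : F -> F) a b :
  a != 0 -> b != 0 -> (nabla f a b <= nablaU f)%N.
Proof.
by move=> a0 b0; apply: leq_trans (leq_bigmax_cond b b0) (leq_bigmax_cond a a0).
Qed.

Theorem theorem3p3 (p n : nat) (F : finFieldType) :
  prime p -> odd p -> (0 < n)%N -> #|F| = (p ^ n)%N ->
  [/\ (p = 29%N \/ p = 37%N -> nablaU (@finv01 F) = 4%N),
      (p <> 29%N /\ p <> 37%N -> (nablaU (@finv01 F) <= 3)%N)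
    & forall a b : F, nabla (@finv01 F) a b = 4%N <->
        (p = 29%N /\ ((pm 2 a /\ pm 12 b) \/ (pm 12 a /\ pm 2 b)))
     \/ (p = 37%N /\ ((pm 2 a /\ pm 6 b) \/ (pm 6 a /\ pm 2 b)))].
Proof.
move=> pr_p odd_p _ cardF; have charFp := card_finPcharP cardF pr_p.
have nabla_neq0 a b : nabla (@finv01 F) a b = 4%N -> a != 0 /\ b != 0.
  have oddF : odd #|F| by rewrite cardF oddX odd_p orbT.
  move=> h4; split; apply: contraTneq oddF => z.
    by rewrite -(nabla0l (@finv01 F) b) -z h4.
  by rewrite -(nabla0l (@finv01 F) a) nablaC -z h4.
have nabla_eq4 a b : nabla (@finv01 F) a b = 4%N <-> exceptional_char p a b.
  split=> [h4 | /(exceptional_nabla_finv01 charFp) //].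
  by have [a0 b0] := nabla_neq0 a b h4; apply: (nabla_finv01_eq4 charFp odd_p).
have le4 : (nablaU (@finv01 F) <= 4)%N by apply: nablaU_le; apply: (nabla_finv01_le4 charFp odd_p).
split=> [hp | [n29 n37] | a b]; last exact: nabla_eq4.
- have [a [b h4]] : exists a b, nabla (@finv01 F) a b = 4%N.
    by case: hp => hp; [exists 2, 12 | exists 2, 6]; apply/nabla_eq4; [left | right];
      split=> //; left; split; left.
  have [a0 b0] := nabla_neq0 a b h4.
  by apply/eqP; rewrite eqn_leq le4 -{1}h4 nabla_le_nablaU.
- apply: nablaU_le => a b a0 b0; rewrite -ltnS ltn_neqAle (nabla_finv01_le4 charFp odd_p) // andbT.
  by apply/eqP => /nabla_eq4 [[]|[]].
Qed.
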